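(* Let $T_1,\dots,T_n$ be non-negative, possibly dependent, random variables (component lifetimes) such that the series-system lifetimes below are absolutely continuous. Let $T_D^S$ have survival function $\overline F_D^S(t)=P(T_1>t,\dots,T_n>t)$ and $T_I^S$ have survival function $\overline F_I^S(t)=\prod_{i=1}^n P(T_i>t)$, with failure rates $r_D^S(t)=f_D^S(t)/\overline F_D^S(t)$ and $r_I^S(t)=f_I^S(t)/\overline F_I^S(t)$ (where $f$ denotes the corresponding density), and $r_I^S(t)>0$. Define the relative errors $$E_S^{r}(t)=\frac{r_D^S(t)-r_I^S(t)}{r_I^S(t)},\qquad E_S^{\overline F}(t)=\frac{\overline F_D^S(t)-\overline F_I^S(t)}{\overline F_I^S(t)}.$$ Let $t_0>0$. If $E_S^r(t)\le 0$ (resp. $\ge 0$) for all $t\le t_0$, then $E_S^{\overline F}(t)\ge 0$ (resp. $\le 0$) for $t\le t_0$.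
   Context: $T_D^S$ is the lifetime of the series system with the actual (dependent) components and $T_I^S$ the lifetime of the same series system under the assumption that the components are independent with the same marginals; times $t$ range over $[0,\infty)$. *)

From HB Require Import structures.
From mathcomp Require Import all_boot all_order all_algebra.
From mathcomp Require Import all_classical all_reals all_analysis.
Set Implicit Arguments. Unset Strict Implicit. Unset Printing Implicit Defensive.
Import Order.TTheory GRing.Theory Num.Theory.
Local Open Scope classical_set_scope.
Local Open Scope ring_scope.

Definition survD d (Omega : measurableType d) (R : realType)
  (P : probability Omega R) (n : nat) (X : 'I_n -> {RV P >-> R}) (t : R) : R :=
  fine (P [set w | forall i, t < X i w]).

Definition survI d (Omega : measurableType d) (R : realType)
  (P : probability Omega R) (n : nat) (X : 'I_n -> {RV P >-> R}) (t : R) : R :=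
  \prod_(i < n) fine (P [set w | t < X i w]).

Definition is_density (R : realType) (f S : R -> R) : Prop :=
  measurable_fun setT f /\ (forall x, 0 <= f x) /\
  forall t, ((S t)%:E = \int[lebesgue_measure]_(x in `]t, +oo[) (f x)%:E)%E.

Definition failure_rate (R : realType) (f S : R -> R) (t : R) : R := f t / S t.

Definition rel_error (R : realType) (a b : R) : R := (a - b) / b.

From HB Require Import structures.
From mathcomp Require Import all_boot all_order all_algebra.
From mathcomp Require Import all_classical all_reals all_analysis.
From mathcomp Require Import measurable_realfun lra.
Import Order.TTheory GRing.Theory Num.Theory.
Import numFieldNormedType.Exports.
Local Open Scope classical_set_scope.
Local Open Scope ring_scope.

(* Let h = FbarD / FbarI; then h 0 = 1 and the claim is that h is
   nondecreasing (resp. nonincreasing) on [0, t0].  Only densities are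
   available, not derivatives, so monotonicity comes from an extremum
   argument: if c maximises h on [c, u] and rD <= rI there, then
   fD <= h x * fI <= h c * fI on ]c, u], and integrating gives
   FbarD c - FbarD u <= h c * (FbarI c - FbarI u), i.e. h c <= h u.
   Applied to a maximiser of h on [s, u] this forbids h u < h s.  Where FbarD
   vanishes rD is the junk value 0, so u is first moved, by the intermediate
   value theorem, to a point where h is still below h s but positive. *)

Section survival_function.
Context {R : realType}.
Notation mu := (@lebesgue_measure R).
Context {f S : R -> R}.
Hypothesis fS : is_density f S.

Let mf : measurable_fun setT f. Proof. by case: fS. Qed.
Let f_ge0 x : 0 <= f x. Proof. by case: fS => _ []. Qed.

Let mEFinf (A : set R) : measurable_fun A (EFin \o f : R -> \bar R).
Proof. by apply/measurable_EFinP; exact: measurable_funS mf. Qed.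

Lemma survival_ge0 x : 0 <= S x.
Proof.
case: fS => _ [_ Sf]; rewrite -lee_fin Sf.
by apply: integral_ge0 => y _; rewrite lee_fin.
Qed.

Lemma survivalB {s u : R} : s <= u ->
  ((S s - S u)%:E = \int[mu]_(x in `]s, u]) (f x)%:E)%E.
Proof.
move=> su; have [_ [_ Sf]] := fS.
have := Sf s.
have -> : `]s, +oo[%classic = `]s, u] `|` `]u, +oo[.
  by rewrite -itv_bndbnd_setU// bnd_simp.
rewrite ge0_integral_setU//=; last 3 first.
- exact: mEFinf.
- by move=> x _; rewrite lee_fin.
- apply/disj_set2P; rewrite -subset0 => z/=; rewrite !in_itv/=.
  by move=> [/andP[_ zu] /andP[uz _]]; move: (lt_le_trans uz zu); rewrite ltxx.
rewrite -Sf.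
have : (0 <= \int[mu]_(x in `]s, u]) (f x)%:E)%E.
  by apply: integral_ge0 => x _; rewrite lee_fin.
case: (\int[mu]_(x in _) _)%E => [r _| |] //=.
by rewrite -EFinD => -[->]; rewrite addrK.
Qed.

Lemma survival_gt0 x : 0 < failure_rate f S x -> 0 < S x.
Proof.
move=> r0; rewrite lt0r survival_ge0 andbT.
by apply: contraTneq r0 => S0; rewrite /failure_rate S0 invr0 mulr0 ltxx.
Qed.

Lemma survival_nonincreasing {s u : R} : s <= u -> S u <= S s.
Proof.
move=> su; rewrite -subr_ge0 -lee_fin survivalB//.
by apply: integral_ge0 => y _; rewrite lee_fin.
Qed.

Lemma survival_continuous_within {a b : R} :
  a <= b -> {within `[a, b], continuous S}.
Proof.
move=> ab.
have intf : mu.-integrable `[a, b] (EFin \o f).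
  apply/integrableP; split; first exact: mEFinf.
  under eq_integral => x _ do rewrite /= ger0_norm//.
  by rewrite -integral_itv_obnd_cbnd// -survivalB// ltry.
have SE : {in `[a, b]%classic,
    (fun x => S a - parameterized_integral mu a x f) =1 S}.
  move=> x; rewrite inE/= in_itv/= => /andP[ax _].
  rewrite /parameterized_integral /Rintegral -integral_itv_obnd_cbnd//.
  by rewrite -survivalB//= opprB addrC subrK.
apply: (subspace_eq_continuous SE); apply: within_continuousB.
  exact: continuous_subspaceT (@cst_continuous _ _ (S a)).
exact: parameterized_integral_continuous.
Qed.

Lemma survival_eq1 {a : R} : (forall x, x < a -> S x = 1) -> S a = 1.
Proof.
move=> S1; have a1a : a - 1 < a by rewrite ltrBlDr ltrDl.
have /(continuous_within_itvP _ a1a)[_ _ Sa] :=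
  survival_continuous_within (ltW a1a).
have S1a : S @ a^'- --> (1 : R).
  apply: cvg_near_cst; near=> x; apply: S1; near: x; exact: nbhs_left_lt.
exact: cvg_unique Sa S1a.
Unshelve. all: by end_near. Qed.

End survival_function.

Section survival_comparison.
Context {R : realType}.

Lemma is_densityZ {f S : R -> R} {k : R} : 0 <= k -> is_density f S ->
  is_density (fun x => k * f x) (fun x => k * S x).
Proof.
move=> k0 fS; have [mf [f0 Sf]] := fS; split; last split.
- by apply: measurable_funM => //; exact: measurable_cst.
- by move=> x; rewrite mulr_ge0.
- move=> t; rewrite EFinM Sf.
  under [RHS]eq_integral => x _ do rewrite EFinM.
  rewrite ge0_integralZl//; last by move=> x _; rewrite lee_fin.
  by apply/measurable_EFinP; exact: measurable_funS mf.
Qed.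

Lemma survivalB_le {f1 S1 f2 S2 : R -> R} {s u : R} :
  is_density f1 S1 -> is_density f2 S2 -> s <= u ->
  (forall x, s < x -> x <= u -> f1 x <= f2 x) -> S1 s - S1 u <= S2 s - S2 u.
Proof.
move=> fS1 fS2 su f12; rewrite -lee_fin (survivalB fS1 su) (survivalB fS2 su).
have [mf1 [f1_ge0 _]] := fS1; have [mf2 _] := fS2.
apply: ge0_le_integral => //.
- by move=> x _; rewrite lee_fin.
- by apply/measurable_EFinP; exact: measurable_funS mf1.
- by apply/measurable_EFinP; exact: measurable_funS mf2.
- by move=> x; rewrite /= in_itv/= => /andP[sx xu]; rewrite lee_fin f12.
Qed.

End survival_comparison.

Lemma ler_pdivl_ratioM (R : numFieldType) (p q a b : R) :
  0 < a -> (p / a <= q / b) = (p <= a / b * q).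
Proof. by move=> a0; rewrite ler_pdivrMr// mulrAC [q * a]mulrC mulrAC. Qed.

Lemma ler_pdivr_ratioM (R : numFieldType) (p q a b : R) :
  0 < a -> (q / b <= p / a) = (a / b * q <= p).
Proof. by move=> a0; rewrite ler_pdivlMr// mulrAC [q * a]mulrC mulrAC. Qed.

Lemma within_continuous_div (R : realType) (A : set R) (f g : R -> R) :
  {within A, continuous f} -> {within A, continuous g} ->
  (forall x, A x -> g x != 0) -> {within A, continuous (fun x => f x / g x)}.
Proof.
move=> /subspace_continuousP cf /subspace_continuousP cg g0.
apply/subspace_continuousP => x Ax.
by apply: cvgM; [exact: cf | apply: cvgV; [exact: g0 | exact: cg]].
Qed.

Section survival_ratio.
Context {R : realType} {fD SD fI SI : R -> R}.
Hypotheses (fSD : is_density fD SD) (fSI : is_density fI SI).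

Lemma ratio_le_of_density_le {s u : R} : s <= u -> 0 < SI u ->
  (forall x, s < x -> x <= u -> fD x <= SD s / SI s * fI x) ->
  SD s / SI s <= SD u / SI u.
Proof.
move=> su SIu fDI.
have SIs : 0 < SI s := lt_le_trans SIu (survival_nonincreasing fSI su).
have k0 : 0 <= SD s / SI s by rewrite divr_ge0 ?(survival_ge0 fSD) ?ltW.
have := survivalB_le fSD (is_densityZ k0 fSI) su fDI.
by rewrite /= divfK ?gt_eqF// lerD2l lerN2 ler_pdivlMr.
Qed.

Lemma ratio_ge_of_density_ge {s u : R} : s <= u -> 0 < SI u ->
  (forall x, s < x -> x <= u -> SD s / SI s * fI x <= fD x) ->
  SD u / SI u <= SD s / SI s.
Proof.
move=> su SIu fDI.
have SIs : 0 < SI s := lt_le_trans SIu (survival_nonincreasing fSI su).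
have k0 : 0 <= SD s / SI s by rewrite divr_ge0 ?(survival_ge0 fSD) ?ltW.
have := survivalB_le (is_densityZ k0 fSI) fSD su fDI.
by rewrite /= divfK ?gt_eqF// lerD2l lerN2 ler_pdivrMr.
Qed.

Lemma ratio_continuous_within {a b : R} :
  a <= b -> (forall x, a <= x <= b -> 0 < SI x) ->
  {within `[a, b], continuous (fun x => SD x / SI x)}.
Proof.
move=> ab SI0; apply: within_continuous_div.
- exact: (survival_continuous_within fSD ab).
- exact: (survival_continuous_within fSI ab).
- by move=> x /= xab; rewrite gt_eqF// SI0 -?in_itv.
Qed.

Lemma ratio_nonincreasing {s u : R} : s <= u ->
  (forall x, s <= x <= u -> 0 < failure_rate fI SI x) ->
  (forall x, s <= x <= u -> failure_rate fI SI x <= failure_rate fD SD x) ->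
  SD u / SI u <= SD s / SI s.
Proof.
move=> su rI0 rIrD.
have SI0 x : s <= x <= u -> 0 < SI x by move/rI0/(survival_gt0 fSI).
have SD0 x : s <= x <= u -> 0 < SD x.
  move=> xsu; apply: (survival_gt0 fSD).
  exact: lt_le_trans (rI0 _ xsu) (rIrD _ xsu).
have [c] := EVT_min su (ratio_continuous_within su SI0).
rewrite in_itv/= => /andP[sc cu] ratio_min.
apply: le_trans (ratio_min s _); last by rewrite in_itv/= lexx su.
apply: ratio_ge_of_density_ge => //; first by rewrite SI0// lexx su.
move=> x cx xu; have xsu : s <= x <= u by rewrite (le_trans sc (ltW cx)) xu.
apply: le_trans (_ : SD x / SI x * fI x <= _).
  by rewrite ler_wpM2r ?ratio_min ?in_itv//; case: fSI => _ [].
by rewrite -ler_pdivr_ratioM ?SD0//; exact: rIrD.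
Qed.

Lemma ratio_nondecreasing {s u : R} : s <= u ->
  (forall x, s <= x <= u -> 0 < failure_rate fI SI x) ->
  (forall x, s <= x <= u -> failure_rate fD SD x <= failure_rate fI SI x) ->
  SD s / SI s <= SD u / SI u.
Proof.
move=> su rI0 rDrI.
have SI0 x : s <= x <= u -> 0 < SI x by move/rI0/(survival_gt0 fSI).
rewrite leNgt; apply/negP => ratio_us.
have ratio_u0 : 0 <= SD u / SI u.
  by rewrite divr_ge0 ?(survival_ge0 fSD)// ltW// SI0// su lexx.
pose v := (SD s / SI s + SD u / SI u) / 2.
have v_between : Num.min (SD s / SI s) (SD u / SI u) <= v
                 <= Num.max (SD s / SI s) (SD u / SI u).
  by rewrite min_r ?max_l ?(ltW ratio_us)// /v; apply/andP; split; lra.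
have [u'] := IVT su (ratio_continuous_within su SI0) v_between.
rewrite in_itv/= => /andP[su' u'u] ratio_u'.
have SI0' x : s <= x <= u' -> 0 < SI x.
  by case/andP=> sx xu'; rewrite SI0// sx (le_trans xu' u'u).
have SDu' : 0 < SD u'.
  have : 0 < SD u' / SI u' by rewrite ratio_u' /v; lra.
  by rewrite pmulr_lgt0// invr_gt0 SI0'// su' lexx.
have [c] := EVT_max su' (ratio_continuous_within su' SI0').
rewrite in_itv/= => /andP[sc cu'] ratio_max.
have : SD c / SI c <= SD u' / SI u'.
  apply: ratio_le_of_density_le => //; first by rewrite SI0'// su' lexx.
  move=> x cx xu'; have sx : s <= x := le_trans sc (ltW cx).
  apply: le_trans (_ : SD x / SI x * fI x <= _).
    rewrite -ler_pdivl_ratioM.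
      by apply: rDrI; rewrite sx (le_trans xu' u'u).
    exact: lt_le_trans SDu' (survival_nonincreasing fSD xu').
  by rewrite ler_wpM2r ?ratio_max ?in_itv/= ?sx//; case: fSI => _ [].
have := ratio_max s; rewrite in_itv/= lexx su' => /(_ isT).
rewrite ratio_u' /v; lra.
Qed.

End survival_ratio.

Lemma rel_error_ge0 (R : realType) (a b : R) :
  0 < b -> (0 <= rel_error a b) = (b <= a).
Proof. by move=> b0; rewrite /rel_error ler_pdivlMr// mul0r subr_ge0. Qed.

Lemma rel_error_le0 (R : realType) (a b : R) :
  0 < b -> (rel_error a b <= 0) = (a <= b).
Proof. by move=> b0; rewrite /rel_error ler_pdivrMr// mul0r subr_le0. Qed.

Section series_system.
Context {d : measure_display} {Omega : measurableType d} {R : realType}.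
Context {P : probability Omega R} {n : nat} (X : 'I_n -> {RV P >-> R}).
Hypothesis X_ge0 : forall i w, 0 <= X i w.

Lemma survD_lt0 t : t < 0 -> survD X t = 1.
Proof.
move=> t0; rewrite /survD (_ : [set w | _] = setT) ?probability_setT//.
by apply/seteqP; split => // w _ i; exact: lt_le_trans (X_ge0 i w).
Qed.

Lemma survI_lt0 t : t < 0 -> survI X t = 1.
Proof.
move=> t0; rewrite /survI big1// => i _.
rewrite (_ : [set w | _] = setT) ?probability_setT//.
by apply/seteqP; split => // w _; exact: lt_le_trans (X_ge0 i w).
Qed.

End series_system.

Theorem mainTheorem3 (d : measure_display) (Omega : measurableType d)
  (R : realType) (P : probability Omega R) (n : nat)
  (X : 'I_n -> {RV P >-> R}) (fD fI : R -> R) (t0 : R) :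
  (forall i w, 0 <= X i w) ->
  is_density fD (survD X) ->
  is_density fI (survI X) ->
  (forall t, 0 <= t -> 0 < failure_rate fI (survI X) t) ->
  0 < t0 ->
  ((forall t, 0 <= t <= t0 ->
      rel_error (failure_rate fD (survD X) t) (failure_rate fI (survI X) t) <= 0) ->
    forall t, 0 <= t <= t0 -> 0 <= rel_error (survD X t) (survI X t)) /\
  ((forall t, 0 <= t <= t0 ->
      0 <= rel_error (failure_rate fD (survD X) t) (failure_rate fI (survI X) t)) ->
    forall t, 0 <= t <= t0 -> rel_error (survD X t) (survI X t) <= 0).
Proof.
move=> X_ge0 fSD fSI rI0 _.
have SI0 t : 0 <= t -> 0 < survI X t by move/rI0/(survival_gt0 fSI).
have ratio0 : survD X 0 / survI X 0 = 1.
  rewrite (survival_eq1 fSD (survD_lt0 X X_ge0)).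
  by rewrite (survival_eq1 fSI (survI_lt0 X X_ge0)) divr1.
split=> hyp t /andP[t_ge0 tt0].
- rewrite rel_error_ge0 ?SI0// -[survI X t]mul1r -ler_pdivlMr ?SI0// -ratio0.
  apply: (ratio_nondecreasing fSD fSI t_ge0) => x /andP[x_ge0 xt].
    exact: rI0.
  by rewrite -rel_error_le0 ?rI0// hyp// x_ge0 (le_trans xt tt0).
- rewrite rel_error_le0 ?SI0// -[survI X t]mul1r -ler_pdivrMr ?SI0// -ratio0.
  apply: (ratio_nonincreasing fSD fSI t_ge0) => x /andP[x_ge0 xt].
    exact: rI0.
  by rewrite -rel_error_ge0 ?rI0// hyp// x_ge0 (le_trans xt tt0).
Qed.
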